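(* Let $n\ge3$, $2\le i\le n-1$, $\mathfrak g=\mathfrak{sp}(n,\mathbb C)$, $\mathfrak q$ of type $C_n(i)$, $\mu=\varepsilon_1+\varepsilon_{i+1}$, $\epsilon_\gamma=\varepsilon_2-\varepsilon_{i+1}$. Then $\mathrm{pr}_{\mathfrak l_\gamma\otimes\mathfrak z(\mathfrak n)}(\tau_2(X_\mu+X_{\epsilon_\gamma}))$ is a highest weight vector for $V(\mu+\epsilon_\gamma)$, the irreducible $\mathfrak l$-submodule of $\mathfrak l_\gamma\otimes\mathfrak z(\mathfrak n)$ with highest weight $\mu+\epsilon_\gamma=\varepsilon_1+\varepsilon_2$.
   Context: $\mathfrak g=\mathfrak{sp}(n,\mathbb C)\subset\mathfrak{gl}(2n,\mathbb C)$; $\hat j=j+n$, $E_{ab}$ matrix units. Cartan $\mathfrak h$ = matrices $\sum_j h_j(E_{jj}-E_{\hat j\hat j})$, $\varepsilon_j$ picks $h_j$. Roots $\pm\varepsilon_j\pm\varepsilon_k$ ($j<k$), $\pm2\varepsilon_j$; positive system with simple roots $\alpha_j=\varepsilon_j-\varepsilon_{j+1}$ ($j<n$), $\alpha_n=2\varepsilon_n$. Root vectors: $X_{\varepsilon_j-\varepsilon_k}=E_{jk}-E_{\hat k\hat j}$ ($j\ne k$), $X_{\varepsilon_j+\varepsilon_k}=E_{j\hat k}+E_{k\hat j}$, $X_{-(\varepsilon_j+\varepsilon_k)}=E_{\hat jk}+E_{\hat kj}$, $X_{2\varepsilon_j}=E_{j\hat j}$, $X_{-2\varepsilon_j}=E_{\hat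 jj}$. Killing form $\kappa=c_0\mathrm{Tr}(XY)$, $c_0>0$. $\mathfrak q=\mathfrak l\oplus\mathfrak n$ is the standard maximal parabolic subalgebra determined by $\alpha_i$; grading $\mathfrak g=\bigoplus_{j=-2}^2\mathfrak g(j)$ by the $\alpha_i$-coefficient, $\mathfrak l=\mathfrak g(0)$, $\Delta(\mathfrak g(1))=\{\varepsilon_j\pm\varepsilon_k:1\le j\le i<k\le n\}$, $\mathfrak z(\mathfrak n)=\mathfrak g(2)$ with roots $\varepsilon_j+\varepsilon_k$ ($j<k\le i$), $2\varepsilon_j$ ($j\le i$). $\mathfrak l=\mathfrak z(\mathfrak l)\oplus\mathfrak l_\gamma\oplus\mathfrak l_{n\gamma}$ with $\mathfrak l_\gamma\cong\mathfrak{sl}(i,\mathbb C)$ (simple roots $\alpha_1,\dots,\alpha_{i-1}$) and $\mathfrak l_{n\gamma}\cong\mathfrak{sp}(n-i,\mathbb C)$ (simple roots $\alpha_{i+1},\dots,\alpha_n$); $\mathrm{pr}_{\mathfrak l_\gamma\otimes\mathfrak z(\mathfrak n)}$ is the projection of $\mathfrak l\otimes\mathfrak z(\mathfrak n)$ onto $\mathfrak l_\gamma\otimes\mathfrak z(\mathfrak n)$ along this decomposition; $\mathfrak l$ acts on tensor products by the usual tensor product action. Highest weight vector means a weight vector of weight $\mu+\epsilon_\gamma$ annihilated by all $X_\alpha$, $\alpha\in\Pi\setminus\{\alpha_i\}$. $\omega=\frac1{c_0}\sum_{j=1}^iX_{-2\varepsilon_j}\otimes X_{2\varepsilon_j}+\frac1{2c_0}\sum_{1\le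 j<k\le i}X_{-(\varepsilon_j+\varepsilon_k)}\otimes X_{\varepsilon_j+\varepsilon_k}$ and $\tau_2(X)=\tfrac12(\mathrm{ad}(X)^2\otimes\mathrm{Id})\omega$ for $X\in\mathfrak g(1)$. *)

From HB Require Import structures.
From mathcomp Require Import all_boot all_order all_algebra.
Set Implicit Arguments. Unset Strict Implicit. Unset Printing Implicit Defensive.
Import Order.TTheory GRing.Theory Num.Theory.
Local Open Scope ring_scope.

Section SpDefs.
Variable R : numClosedFieldType.
Variable n : nat.

(* gl(2n) = 'M_(n+n); rows/columns are indexed 1..2n in the paper, here by
   ordinals 0..2n-1; index j (1-based) is the ordinal with value j-1. *)
Notation N := (n + n)%N.
Notation mat := 'M[R]_N.

Definition hat (j : nat) : nat := (j + n)%N.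

Definition E (a b : nat) : mat :=
  \matrix_(r, c) ((r.+1 == a) && (c.+1 == b))%:R.

Definition Xminus (j k : nat) : mat := E j k - E (hat k) (hat j).
Definition Xplus (j k : nat) : mat := E j (hat k) + E k (hat j).
Definition Xnegplus (j k : nat) : mat := E (hat j) k + E (hat k) j.
Definition Xtwo (j : nat) : mat := E j (hat j).
Definition Xnegtwo (j : nat) : mat := E (hat j) j.

Definition cartan (h : nat -> R) : mat :=
  \sum_(1 <= j < n.+1) h j *: (E j j - E (hat j) (hat j)).

Definition ad (X Y : mat) : mat := X *m Y - Y *m X.

Definition Jmx : mat := \sum_(1 <= j < n.+1) (E j (hat j) - E (hat j) j).
Definition in_sp (Y : mat) : Prop := Y^T *m Jmx + Jmx *m Y = 0.

(* Tensors in gl(2n) (x) gl(2n): T represents sum_{(a,b)} e_{ab} (x) T(a,b),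
   where e_{ab} = delta_mx a b. *)
Definition tens := {ffun 'I_N * 'I_N -> mat}.

Definition tpure (A B : mat) : tens := [ffun p => A p.1 p.2 *: B].
(* f (x) Id *)
Definition tmapl (f : mat -> mat) (T : tens) : tens :=
  [ffun p => \sum_(q : 'I_N * 'I_N) (f (delta_mx q.1 q.2)) p.1 p.2 *: T q].
Definition tmapr (g : mat -> mat) (T : tens) : tens := [ffun p => g (T p)].

Definition tact (X : mat) (T : tens) : tens := tmapl (ad X) T + tmapr (ad X) T.

(* membership of T in U (x) W for subspaces U, W of gl(2n):
   all left slices lie in U and all right components lie in W *)
Definition tens_in (U W : mat -> Prop) (T : tens) : Prop :=
  (forall p, W (T p)) /\
  (forall r c : 'I_N, U (\matrix_(a, b) T (a, b) r c)).

Variable i : nat.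

Definition omega (c0 : R) : tens :=
  c0^-1 *: \sum_(1 <= j < i.+1) tpure (Xnegtwo j) (Xtwo j)
  + (2 * c0)^-1 *: \sum_(1 <= j < i.+1) \sum_(j.+1 <= k < i.+1)
        tpure (Xnegplus j k) (Xplus j k).

Definition tau2 (c0 : R) (X : mat) : tens :=
  2^-1 *: tmapl (fun Y => ad X (ad X Y)) (omega c0).

(* l_gamma ~ sl(i): span of the X_{e_j-e_k} (j<>k<=i) and the coroots,
   i.e. sum_{j,k<=i} a_jk (E_jk - E_{hat k hat j}) with trace(a) = 0 *)
Definition in_lgamma (Y : mat) : Prop :=
  exists a : nat -> nat -> R,
    \sum_(1 <= j < i.+1) a j j = 0 /\
    Y = \sum_(1 <= j < i.+1) \sum_(1 <= k < i.+1) a j k *: Xminus j k.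
Definition in_zl (Y : mat) : Prop :=
  exists c : R, Y = c *: \sum_(1 <= j < i.+1) (E j j - E (hat j) (hat j)).
Definition outer_idx (r : nat) : bool :=
  ((i < r <= n) || (n + i < r <= n + n))%N.
Definition in_lngamma (Y : mat) : Prop :=
  in_sp Y /\ forall r c : 'I_N,
    ~~ (outer_idx r.+1 && outer_idx c.+1) -> Y r c = 0.
Definition in_zn (Y : mat) : Prop :=
  in_sp Y /\ forall r c : 'I_N,
    ~~ ((1 <= r.+1 <= i) && (n + 1 <= c.+1 <= n + i))%N -> Y r c = 0.

Definition in_zl_plus_lngamma (Y : mat) : Prop :=
  exists Y1 Y2, in_zl Y1 /\ in_lngamma Y2 /\ Y = Y1 + Y2.

(* T = pr_{l_gamma (x) z(n)} T0, for T0 in l (x) z(n) = (z(l)+l_gamma+l_ngamma)(x) z(n):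
   T is the l_gamma (x) z(n)-component of T0 along (z(l) + l_ngamma) (x) z(n). *)
Definition is_pr_lgamma_zn (T0 T : tens) : Prop :=
  tens_in in_lgamma in_zn T /\ tens_in in_zl_plus_lngamma in_zn (T0 - T).

Definition Xsimple (j : nat) : mat :=
  if (j < n)%N then Xminus j j.+1 else Xtwo n.

(* highest weight vector of weight lam (lam(h) for Cartan coefficients h),
   w.r.t. the simple roots of l, i.e. Pi \ {alpha_i} *)
Definition is_hwv (lam : (nat -> R) -> R) (T : tens) : Prop :=
  T != 0 /\
  (forall h : nat -> R, tact (cartan h) T = lam h *: T) /\
  (forall j, (1 <= j <= n)%N -> j != i -> tact (Xsimple j) T = 0).

End SpDefs.

(* Write X = X_{e1+e_{i+1}} + X_{e2-e_{i+1}}.  In ad(X)^2 (x) Id applied to omega, only the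
   terms whose left factor is X_{-2e1}, X_{-2e2}, X_{-(e1+ek)} or X_{-(e2+ek)} survive, and
     tau_2(X) = T + D,   T = (4c0)^-1 sum_{k<=i} (X_{e2-ek} (x) X_{e1+ek} - X_{e1-ek} (x) X_{e2+ek}),
   where T lies in l_gamma (x) z(n) (with X_{ej-ej} = H_j) and D in l_ngamma (x) z(n), its left
   factors being H_{i+1} and X_{+-2e_{i+1}}.  Since l_gamma meets z(l) + l_ngamma trivially, the
   projection is unique, hence equal to T.  Each summand of T has weight e1 + e2; for j > i,
   X_{alpha_j} commutes with every factor, while for j < i the summands k = j and k = j + 1 cancel. *)

From HB Require Import structures.
From mathcomp Require Import all_boot all_order all_algebra.
From mathcomp Require Import zify ring.
Import Order.TTheory GRing.Theory Num.Theory.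
Local Open Scope ring_scope.
Set Implicit Arguments. Unset Strict Implicit. Unset Printing Implicit Defensive.

Ltac decide_nat_tests :=
  repeat match goal with
  | |- context [(?x == ?y)] =>
      let b := fresh in
      first [ have b : (x == y) = true by apply/eqP; rewrite /hat; lia
            | have b : (x == y) = false by apply/negbTE/eqP; rewrite /hat; lia ];
      rewrite b; clear b
  | |- context [(?x <= ?y)%N] =>
      let b := fresh in
      first [ have b : (x <= y)%N = true by apply/idP; rewrite /hat; lia
            | have b : (x <= y)%N = false by apply/negbTE; rewrite -ltnNge /hat; lia ];
      rewrite b; clear b
  end; rewrite ?mulr0n ?mulr1n ?scale0r ?scale1r ?addr0 ?add0r ?subr0 ?sub0r.

Ltac entrywise := apply/matrixP => ? ?; rewrite !mxE; ring.

Lemma big_nat_if_eq (V : nmodType) lo hi x (F : nat -> V) : (lo <= x < hi)%N ->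
  \sum_(lo <= j < hi) (if j == x then F j else 0) = F x.
Proof. by move=> Hx; rewrite -big_mkcond big_nat1_eq Hx. Qed.

Lemma big_nat_indicator (R : pzRingType) (V : lmodType R) lo hi x (F : nat -> V) (P : nat -> bool) :
  (lo <= x < hi)%N -> (forall j, (lo <= j < hi)%N -> P j = (j == x)) ->
  \sum_(lo <= j < hi) (P j)%:R *: F j = F x.
Proof.
move=> Hx HP; rewrite -(big_nat_if_eq F Hx); apply: eq_big_nat => j /HP ->.
by case: eqP; rewrite ?scale1r ?scale0r.
Qed.

Lemma big_nat_indicator0 (R : pzRingType) (V : lmodType R) lo hi (F : nat -> V) (P : nat -> bool) :
  (forall j, (lo <= j < hi)%N -> P j = false) -> \sum_(lo <= j < hi) (P j)%:R *: F j = 0.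
Proof. by move=> HP; rewrite big_nat_cond big1 // => j /andP [/HP -> _]; rewrite scale0r. Qed.

Section MatrixUnits.
Variable R : numClosedFieldType.
Variable n : nat.
Notation N := (n + n)%N.
Notation mat := 'M[R]_N.
Notation E := (@E R n).

(* Indices are 1-based: [E a b] vanishes unless [1 <= a, b <= N]. *)
Lemma mul_E a b c d :
  E a b *m E c d = ((b == c) && (0 < b)%N && (b <= N)%N)%:R *: E a d.
Proof.
apply/matrixP => r s; rewrite !mxE.
have [/andP [/andP [/eqP <- b_gt0] b_le]|Hbc] := boolP (_ && _ && _).
- have b_lt : (b.-1 < N)%N by lia.
  rewrite (bigD1 (Ordinal b_lt)) //= big1 ?addr0.
    rewrite !mxE /= prednK // eqxx andbT mul1r.
    by case: (r.+1 == a); case: (s.+1 == d); rewrite /= ?mulr1 ?mulr0.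
  move=> t /eqP Ht; rewrite !mxE (_ : (t.+1 == b) = false) ?andbF ?mul0r //.
  by apply/negbTE/eqP => Htb; apply: Ht; apply/val_inj => /=; lia.
- rewrite mul0r big1 // => t _; rewrite !mxE.
  case Htb: (t.+1 == b); case Htc: (t.+1 == c); rewrite ?andbF /= ?mulr0 ?mul0r //.
  by move: Hbc; have := ltn_ord t; rewrite -(eqP Htb) -(eqP Htc) eqxx /=; lia.
Qed.

Lemma ad_E a b c d : ad (E a b) (E c d) =
  ((b == c) && (0 < b)%N && (b <= N)%N)%:R *: E a d
  - ((d == a) && (0 < d)%N && (d <= N)%N)%:R *: E c b.
Proof. by rewrite /ad !mul_E. Qed.

Lemma tr_E a b : (E a b)^T = E b a.
Proof. by apply/matrixP => r c; rewrite !mxE andbC. Qed.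

Lemma ad_is_linear (Y : mat) : linear (ad Y).
Proof.
move=> c A B; rewrite /ad mulmxDr mulmxDl -scalemxAr -scalemxAl.
by rewrite scalerBr opprD addrACA.
Qed.
HB.instance Definition _ (Y : mat) :=
  GRing.isLinear.Build R mat mat *:%R (ad Y) (ad_is_linear Y).

Lemma adDr (Y A B : mat) : ad Y (A + B) = ad Y A + ad Y B.
Proof. exact: linearD. Qed.

Lemma adr0 (Y : mat) : ad Y 0 = 0.
Proof. exact: raddf0. Qed.

Lemma adNr (Y A : mat) : ad Y (- A) = - ad Y A.
Proof. exact: linearN. Qed.

Lemma adZr (Y : mat) c (A : mat) : ad Y (c *: A) = c *: ad Y A.
Proof. exact: linearZ. Qed.

Lemma adDl (A B Y : mat) : ad (A + B) Y = ad A Y + ad B Y.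
Proof. by rewrite /ad mulmxDl mulmxDr opprD addrACA. Qed.

Lemma adNl (A Y : mat) : ad (- A) Y = - ad A Y.
Proof. by rewrite /ad mulNmx mulmxN opprK opprB addrC. Qed.

Lemma linear_delta_sum (f : {linear mat -> mat}) (A : mat) :
  f A = \sum_(q : 'I_N * 'I_N) A q.1 q.2 *: f (delta_mx q.1 q.2).
Proof.
rewrite {1}(matrix_sum_delta A) pair_bigA /= linear_sum.
by apply: eq_bigr => q _; rewrite linearZ.
Qed.
End MatrixUnits.

Section Tensors.
Variable R : numClosedFieldType.
Variable n : nat.
Notation N := (n + n)%N.
Notation mat := 'M[R]_N.
Notation tens := (@tens R n).
Notation tpure := (@tpure R n).
Notation tmapl := (@tmapl R n).
Notation tmapr := (@tmapr R n).
Notation tact := (@tact R n).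

Lemma tmapl_is_linear (f : mat -> mat) : linear (tmapl f).
Proof.
move=> c T1 T2; apply/ffunP => p; rewrite !ffunE scaler_sumr -big_split.
by apply: eq_bigr => q _; rewrite !ffunE scalerDr !scalerA mulrC.
Qed.
HB.instance Definition _ (f : mat -> mat) :=
  GRing.isLinear.Build R tens tens *:%R (tmapl f) (tmapl_is_linear f).

Lemma tmapl_sum (f : mat -> mat) I (r : seq I) (P : pred I) (F : I -> tens) :
  tmapl f (\sum_(k <- r | P k) F k) = \sum_(k <- r | P k) tmapl f (F k).
Proof. exact: raddf_sum. Qed.

Lemma tmaplZ (f : mat -> mat) c (T : tens) : tmapl f (c *: T) = c *: tmapl f T.
Proof. exact: linearZ. Qed.

Lemma tmapr_is_linear (g : {linear mat -> mat}) : linear (tmapr g).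
Proof. by move=> c T1 T2; apply/ffunP => p; rewrite !ffunE linearP. Qed.
HB.instance Definition _ (g : {linear mat -> mat}) :=
  GRing.isLinear.Build R tens tens *:%R (tmapr g) (tmapr_is_linear g).

Lemma tact_is_linear (X : mat) : linear (tact X).
Proof. by move=> c T1 T2; rewrite /tact !linearP scalerDr addrACA. Qed.
HB.instance Definition _ (X : mat) :=
  GRing.isLinear.Build R tens tens *:%R (tact X) (tact_is_linear X).

Lemma tactZ (X : mat) c (T : tens) : tact X (c *: T) = c *: tact X T.
Proof. exact: linearZ. Qed.

Lemma tactB (X : mat) (T1 T2 : tens) : tact X (T1 - T2) = tact X T1 - tact X T2.
Proof. exact: raddfB. Qed.

Lemma tact_sum (X : mat) I (r : seq I) (P : pred I) (F : I -> tens) :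
  tact X (\sum_(k <- r | P k) F k) = \sum_(k <- r | P k) tact X (F k).
Proof. exact: raddf_sum. Qed.

Lemma tpure_is_linear (A : mat) : linear (tpure A).
Proof.
by move=> c B1 B2; apply/ffunP => p; rewrite !ffunE scalerDr !scalerA mulrC.
Qed.
HB.instance Definition _ (A : mat) :=
  GRing.isLinear.Build R mat tens *:%R (tpure A) (tpure_is_linear A).

Lemma tpureZr c (A B : mat) : tpure A (c *: B) = c *: tpure A B.
Proof. exact: linearZ. Qed.

Lemma tpureDl (A1 A2 B : mat) : tpure (A1 + A2) B = tpure A1 B + tpure A2 B.
Proof. by apply/ffunP => p; rewrite !ffunE mxE scalerDl. Qed.

Lemma tpureZl c (A B : mat) : tpure (c *: A) B = c *: tpure A B.
Proof. by apply/ffunP => p; rewrite !ffunE mxE scalerA. Qed.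

Lemma tpureNl (A B : mat) : tpure (- A) B = - tpure A B.
Proof. by rewrite -scaleN1r tpureZl scaleN1r. Qed.

Lemma tpureBl (A1 A2 B : mat) : tpure (A1 - A2) B = tpure A1 B - tpure A2 B.
Proof. by rewrite tpureDl tpureNl. Qed.

Lemma tpure0l (B : mat) : tpure 0 B = 0.
Proof. by rewrite -(scale0r 0) tpureZl scale0r. Qed.

Lemma tmapl_pure (f : {linear mat -> mat}) (A B : mat) :
  tmapl f (tpure A B) = tpure (f A) B.
Proof.
apply/ffunP => p; rewrite ffunE (linear_delta_sum f A) ffunE summxE scaler_suml.
by apply: eq_bigr => q _; rewrite !ffunE mxE scalerA mulrC.
Qed.

Lemma tact_pure (X A B : mat) :
  tact X (tpure A B) = tpure (ad X A) B + tpure A (ad X B).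
Proof.
rewrite /tact (tmapl_pure (ad X)); congr (_ + _).
by apply/ffunP => p; rewrite !ffunE linearZ.
Qed.
End Tensors.

Section Subspaces.
Variable R : numClosedFieldType.
Variable n : nat.
Notation N := (n + n)%N.
Notation mat := 'M[R]_N.
Notation tpure := (@tpure R n).

Definition subspace (V : lmodType R) (U : V -> Prop) : Prop :=
  U 0 /\ forall c A B, U A -> U B -> U (c *: A + B).

Section SubspaceClosure.
Variables (V : lmodType R) (U : V -> Prop).
Hypothesis HU : subspace U.

Lemma subspaceD A B : U A -> U B -> U (A + B).
Proof. by case: HU => _ H HA HB; rewrite -[A]scale1r; apply: H. Qed.

Lemma subspaceZ c A : U A -> U (c *: A).
Proof. by case: HU => H0 H HA; rewrite -[c *: A]addr0; apply: H. Qed.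

Lemma subspaceB A B : U A -> U B -> U (A - B).
Proof. by move=> HA HB; rewrite -scaleN1r; apply: subspaceD => //; apply: subspaceZ. Qed.

Lemma subspace_sum I (r : seq I) (P : pred I) (F : I -> V) :
  (forall k, P k -> U (F k)) -> U (\sum_(k <- r | P k) F k).
Proof. by move=> HF; apply: big_ind => //; [case: HU | apply: subspaceD]. Qed.
End SubspaceClosure.

Definition supported_on (P : nat -> nat -> bool) (Y : mat) : Prop :=
  forall r c : 'I_N, ~~ P r.+1 c.+1 -> Y r c = 0.

Lemma supported_on_subspace P : subspace (supported_on P).
Proof.
split=> [r c _|c A B HA HB r s H]; first by rewrite mxE.
by rewrite !mxE HA // HB // mulr0 addr0.
Qed.

Lemma supported_on_E (P : nat -> nat -> bool) a b : P a b -> supported_on P (@E R n a b).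
Proof.
move=> Hab r s; rewrite mxE; case: eqP => [->|] //=; case: eqP => [->|] //=.
by rewrite Hab.
Qed.

Section TensorMembership.
Variables U W : mat -> Prop.
Hypotheses (HU : subspace U) (HW : subspace W).

Lemma tens_in_subspace : subspace (tens_in U W).
Proof.
split.
  split=> [p|r s]; first by rewrite ffunE; case: HW.
  by rewrite (_ : \matrix_(a, b) _ = 0); [case: HU | apply/matrixP => a b; rewrite !mxE ffunE mxE].
move=> c T1 T2 [H1a H1b] [H2a H2b]; split=> [p|r s].
  by rewrite !ffunE; case: HW => _; apply.
rewrite (_ : \matrix_(a, b) _ =
  c *: \matrix_(a, b) T1 (a, b) r s + \matrix_(a, b) T2 (a, b) r s).
  by case: HU => _; apply.
by apply/matrixP => a b; rewrite !mxE !ffunE !mxE.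
Qed.

Lemma tens_in_pure A B : U A -> W B -> tens_in U W (tpure A B).
Proof.
move=> HA HB; split=> [p|r s]; first by rewrite ffunE; apply: (subspaceZ HW).
rewrite (_ : \matrix_(a, b) _ = B r s *: A); first exact: subspaceZ.
by apply/matrixP => a b; rewrite !mxE ffunE mxE mulrC.
Qed.
End TensorMembership.
End Subspaces.

Section SymplecticAlgebra.
Variable R : numClosedFieldType.
Variable n : nat.
Notation E := (@E R n).
Notation hat := (hat n).
Notation Jmx := (@Jmx R n).
Notation in_sp := (@in_sp R n).
Notation cartan := (@cartan R n).
Notation Xplus := (@Xplus R n).
Notation Xminus := (@Xminus R n).

Ltac index_lia := move=> *; rewrite /hat; lia.

Lemma E_mulJ a b : (1 <= b <= n)%N -> E a b *m Jmx = E a (hat b).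
Proof.
move=> Hb; rewrite /Jmx mulmx_sumr.
under eq_bigr => j _ do rewrite mulmxBr !mul_E.
rewrite sumrB [X in _ - X]big_nat_indicator0 ?subr0; last by index_lia.
by rewrite (big_nat_indicator _ _ (x := b)); [ | lia | index_lia].
Qed.

Lemma Ehat_mulJ a b : (1 <= b <= n)%N -> E a (hat b) *m Jmx = - E a b.
Proof.
move=> Hb; rewrite /Jmx mulmx_sumr.
under eq_bigr => j _ do rewrite mulmxBr !mul_E.
rewrite sumrB big_nat_indicator0 ?sub0r; last by index_lia.
by rewrite (big_nat_indicator _ _ (x := b)); [ | lia | index_lia].
Qed.

Lemma J_mulE a b : (1 <= a <= n)%N -> Jmx *m E a b = - E (hat a) b.
Proof.
move=> Ha; rewrite /Jmx mulmx_suml.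
under eq_bigr => j _ do rewrite mulmxBl !mul_E.
rewrite sumrB big_nat_indicator0 ?sub0r; last by index_lia.
by rewrite (big_nat_indicator _ _ (x := a)); [ | lia | index_lia].
Qed.

Lemma J_mulEhat a b : (1 <= a <= n)%N -> Jmx *m E (hat a) b = E a b.
Proof.
move=> Ha; rewrite /Jmx mulmx_suml.
under eq_bigr => j _ do rewrite mulmxBl !mul_E.
rewrite sumrB [X in _ - X]big_nat_indicator0 ?subr0; last by index_lia.
by rewrite (big_nat_indicator _ _ (x := a)); [ | lia | index_lia].
Qed.

Lemma Xplus_sym j k : Xplus j k = Xplus k j.
Proof. exact: addrC. Qed.

Lemma Xplus_diag j : Xplus j j = 2 *: @Xtwo R n j.
Proof. by rewrite scaler_nat mulr2n. Qed.

Lemma in_sp_subspace : subspace in_sp.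
Proof.
rewrite /in_sp; split=> [|c A B HA HB]; first by rewrite trmx0 mul0mx mulmx0 addr0.
rewrite linearD linearZ /= mulmxDl mulmxDr -scalemxAl -scalemxAr.
by rewrite addrACA -scalerDr HA HB scaler0 addr0.
Qed.

Ltac sp_check :=
  rewrite /in_sp ?(raddfD, raddfN) /= ?(mulmxDl, mulmxDr, mulNmx, mulmxN) !tr_E;
  rewrite ?(Ehat_mulJ, J_mulEhat); try lia; rewrite ?(E_mulJ, J_mulE); try lia;
  entrywise.

Lemma in_sp_Xplus j k : (1 <= j <= n)%N -> (1 <= k <= n)%N -> in_sp (Xplus j k).
Proof. by move=> Hj Hk; sp_check. Qed.

Lemma in_sp_Xminus j k : (1 <= j <= n)%N -> (1 <= k <= n)%N -> in_sp (Xminus j k).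
Proof. by move=> Hj Hk; sp_check. Qed.

Lemma in_sp_Xtwo j : (1 <= j <= n)%N -> in_sp (@Xtwo R n j).
Proof. by move=> Hj; sp_check. Qed.

Lemma in_sp_Xnegtwo j : (1 <= j <= n)%N -> in_sp (@Xnegtwo R n j).
Proof. by move=> Hj; sp_check. Qed.

Lemma cartan_mulE h a b : (1 <= a <= n)%N -> cartan h *m E a b = h a *: E a b.
Proof.
move=> Ha; rewrite /cartan mulmx_suml.
under eq_bigr => j _ do
  rewrite -scalemxAl mulmxBl !mul_E scalerBr !scalerA !(mulrC (h j)) -!scalerA.
rewrite sumrB [X in _ - X]big_nat_indicator0 ?subr0; last by index_lia.
by rewrite (big_nat_indicator _ _ (x := a)); [ | lia | index_lia].
Qed.

Lemma cartan_mulEhat h a b : (1 <= a <= n)%N ->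
  cartan h *m E (hat a) b = - h a *: E (hat a) b.
Proof.
move=> Ha; rewrite /cartan mulmx_suml.
under eq_bigr => j _ do
  rewrite -scalemxAl mulmxBl !mul_E scalerBr !scalerA !(mulrC (h j)) -!scalerA.
rewrite sumrB big_nat_indicator0 ?sub0r; last by index_lia.
by rewrite (big_nat_indicator _ _ (x := a)) ?scaleNr; [ | lia | index_lia].
Qed.

Lemma E_mulcartan h a b : (1 <= b <= n)%N -> E a b *m cartan h = h b *: E a b.
Proof.
move=> Hb; rewrite /cartan mulmx_sumr.
under eq_bigr => j _ do
  rewrite -scalemxAr mulmxBr !mul_E scalerBr !scalerA !(mulrC (h j)) -!scalerA.
rewrite sumrB [X in _ - X]big_nat_indicator0 ?subr0; last by index_lia.
by rewrite (big_nat_indicator _ _ (x := b)); [ | lia | index_lia].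
Qed.

Lemma Ehat_mulcartan h a b : (1 <= b <= n)%N ->
  E a (hat b) *m cartan h = - h b *: E a (hat b).
Proof.
move=> Hb; rewrite /cartan mulmx_sumr.
under eq_bigr => j _ do
  rewrite -scalemxAr mulmxBr !mul_E scalerBr !scalerA !(mulrC (h j)) -!scalerA.
rewrite sumrB big_nat_indicator0 ?sub0r; last by index_lia.
by rewrite (big_nat_indicator _ _ (x := b)) ?scaleNr; [ | lia | index_lia].
Qed.

Ltac cartan_check :=
  rewrite ?(cartan_mulEhat, Ehat_mulcartan); try lia;
  rewrite ?(cartan_mulE, E_mulcartan); try lia; entrywise.

Lemma ad_cartan_Xminus h j k : (1 <= j <= n)%N -> (1 <= k <= n)%N ->
  ad (cartan h) (Xminus j k) = (h j - h k) *: Xminus j k.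
Proof. by move=> Hj Hk; rewrite /ad /Xminus mulmxBr mulmxBl; cartan_check. Qed.

Lemma ad_cartan_Xplus h j k : (1 <= j <= n)%N -> (1 <= k <= n)%N ->
  ad (cartan h) (Xplus j k) = (h j + h k) *: Xplus j k.
Proof. by move=> Hj Hk; rewrite /ad /Xplus mulmxDr mulmxDl; cartan_check. Qed.

Lemma ad_Xsimple_Xminus j a k : (1 <= j < n)%N -> (1 <= a <= n)%N -> (1 <= k <= n)%N ->
  ad (Xminus j j.+1) (Xminus a k) =
  (a == j.+1)%:R *: Xminus j k - (k == j)%:R *: Xminus a j.+1.
Proof.
move=> Hj Ha Hk; rewrite /ad /Xminus !(mulmxBl, mulmxBr) !mul_E.
by case: (eqVneq a j.+1) => [->|?]; case: (eqVneq k j) => [->|?];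
  decide_nat_tests; entrywise.
Qed.

Lemma ad_Xsimple_Xplus j a k : (1 <= j < n)%N -> (1 <= a <= n)%N -> (1 <= k <= n)%N ->
  ad (Xminus j j.+1) (Xplus a k) =
  (a == j.+1)%:R *: Xplus j k + (k == j.+1)%:R *: Xplus a j.
Proof.
move=> Hj Ha Hk; rewrite /ad /Xminus /Xplus !(mulmxBl, mulmxBr, mulmxDl, mulmxDr) !mul_E.
by case: (eqVneq a j.+1) => [->|?]; case: (eqVneq k j.+1) => [->|?];
  decide_nat_tests; entrywise.
Qed.

Lemma ad_Xtwo_Xminus a k : (1 <= a < n)%N -> (1 <= k < n)%N ->
  ad (@Xtwo R n n) (Xminus a k) = 0.
Proof.
move=> Ha Hk; rewrite /ad /Xminus /Xtwo !(mulmxBl, mulmxBr) !mul_E.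
by decide_nat_tests; entrywise.
Qed.

Lemma ad_Xtwo_Xplus a k : (1 <= a < n)%N -> (1 <= k < n)%N ->
  ad (@Xtwo R n n) (Xplus a k) = 0.
Proof.
move=> Ha Hk; rewrite /ad /Xplus /Xtwo !(mulmxDl, mulmxDr) !mul_E.
by decide_nat_tests; entrywise.
Qed.
End SymplecticAlgebra.

Section ParabolicDecomposition.
Variable R : numClosedFieldType.
Variables n i : nat.
Notation N := (n + n)%N.
Notation mat := 'M[R]_N.
Notation E := (@E R n).
Notation hat := (hat n).
Notation Xplus := (@Xplus R n).
Notation Xminus := (@Xminus R n).
Notation in_zn := (@in_zn R n i).
Notation in_lgamma := (@in_lgamma R n i).
Notation in_lngamma := (@in_lngamma R n i).
Notation in_zl_plus_lngamma := (@in_zl_plus_lngamma R n i).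

Definition lgamma_comb (a : nat -> nat -> R) : mat :=
  \sum_(1 <= x < i.+1) \sum_(1 <= y < i.+1) a x y *: Xminus x y.

Lemma lgamma_combB a1 a2 :
  lgamma_comb (fun x y => a1 x y - a2 x y) = lgamma_comb a1 - lgamma_comb a2.
Proof.
rewrite /lgamma_comb -sumrB; apply: eq_bigr => x _.
by rewrite -sumrB; apply: eq_bigr => y _; rewrite scalerBl.
Qed.

Lemma lgamma_comb_unit j k : (1 <= j <= i)%N -> (1 <= k <= i)%N ->
  lgamma_comb (fun x y => ((x == j) && (y == k))%:R) = Xminus j k.
Proof.
move=> Hj Hk; rewrite /lgamma_comb.
rewrite (eq_big_nat _ _ (F2 := fun x => (x == j)%:R *: Xminus x k)) => [|x Hx].
  by rewrite (big_nat_indicator _ _ (x := j)) //; lia.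
case: (eqVneq x j) => [->|_] /=; last by rewrite scale0r big1 // => y _; rewrite scale0r.
by rewrite scale1r (big_nat_indicator _ _ (x := k)) //; lia.
Qed.

Lemma diag_sum_unit j k : (1 <= j <= i)%N ->
  \sum_(1 <= x < i.+1) ((x == j) && (x == k))%:R = (j == k)%:R :> R.
Proof.
move=> Hj; rewrite (eq_big_nat _ _ (F2 := fun x => if x == j then (j == k)%:R else 0)).
  by rewrite big_nat_if_eq //; lia.
by move=> x _; case: (eqVneq x j) => [->|].
Qed.

Lemma in_lgamma_Xminus j k : (1 <= j <= i)%N -> (1 <= k <= i)%N -> j != k ->
  in_lgamma (Xminus j k).
Proof.
move=> Hj Hk Hjk; rewrite -lgamma_comb_unit //; eexists; split; last reflexivity.
by rewrite diag_sum_unit // (negbTE Hjk).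
Qed.

Lemma in_lgamma_diag_diff j k : (1 <= j <= i)%N -> (1 <= k <= i)%N ->
  in_lgamma (Xminus j j - Xminus k k).
Proof.
move=> Hj Hk; rewrite -!lgamma_comb_unit // -lgamma_combB.
by eexists; split; last reflexivity; rewrite sumrB !diag_sum_unit // !eqxx subrr.
Qed.

Lemma in_lgamma_subspace : subspace in_lgamma.
Proof.
split.
  exists (fun _ _ => 0); split; first by rewrite big1.
  by rewrite big1 // => x _; rewrite big1 // => y _; rewrite scale0r.
move=> c A B [a1 [tr1 ->]] [a2 [tr2 ->]].
exists (fun x y => c * a1 x y + a2 x y); split.
  by rewrite big_split /= -mulr_sumr tr1 tr2 mulr0 addr0.
rewrite scaler_sumr -big_split; apply: eq_bigr => x _.
by rewrite scaler_sumr -big_split; apply: eq_bigr => y _; rewrite scalerDl scalerA.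
Qed.

Lemma in_sp_supported_subspace P :
  subspace (fun Y : mat => @in_sp R n Y /\ supported_on P Y).
Proof.
have [sp0 spC] := @in_sp_subspace R n; have [supp0 suppC] := supported_on_subspace R n P.
by split=> [|c A B [? ?] [? ?]]; split; auto.
Qed.

Definition zn_support (a b : nat) : bool := ((1 <= a <= i) && (n + 1 <= b <= n + i))%N.
Definition lngamma_support (a b : nat) : bool := @outer_idx n i a && @outer_idx n i b.

Lemma in_zn_subspace : subspace in_zn.
Proof. exact: (in_sp_supported_subspace zn_support). Qed.

Lemma in_lngamma_subspace : subspace in_lngamma.
Proof. exact: (in_sp_supported_subspace lngamma_support). Qed.

Lemma in_zl_plus_lngamma_subspace : subspace in_zl_plus_lngamma.
Proof.
have [lng0 lngC] := in_lngamma_subspace.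
split; first by exists 0, 0; split; [exists 0; rewrite scale0r | rewrite addr0].
move=> c A B [Y1 [Y2 [[c1 ->] [HY2 ->]]]] [Z1 [Z2 [[d1 ->] [HZ2 ->]]]].
exists ((c * c1 + d1) *: \sum_(1 <= j < i.+1) (E j j - E (hat j) (hat j))), (c *: Y2 + Z2).
split; first by eexists.
by split; [exact: lngC | rewrite scalerDl -scalerA scalerDr addrACA].
Qed.

Lemma in_zl_plus_lngamma_lngamma Y : in_lngamma Y -> in_zl_plus_lngamma Y.
Proof. by move=> HY; exists 0, Y; split; [exists 0; rewrite scale0r | rewrite add0r]. Qed.

Section OuterBlock.
Variable m : nat.
Hypothesis Hm : (i < m <= n)%N.

Lemma in_lngamma_Xminus_diag : in_lngamma (Xminus m m).
Proof.
split; first by apply: in_sp_Xminus; lia.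
rewrite /Xminus -scaleN1r addrC; have [_ suppC] := supported_on_subspace R n lngamma_support.
by apply: suppC; apply: supported_on_E; rewrite /lngamma_support /outer_idx /hat; lia.
Qed.

Lemma in_lngamma_Xtwo : in_lngamma (@Xtwo R n m).
Proof.
split; first by apply: in_sp_Xtwo; lia.
by apply: (@supported_on_E R n lngamma_support); rewrite /lngamma_support /outer_idx /hat; lia.
Qed.

Lemma in_lngamma_Xnegtwo : in_lngamma (@Xnegtwo R n m).
Proof.
split; first by apply: in_sp_Xnegtwo; lia.
by apply: (@supported_on_E R n lngamma_support); rewrite /lngamma_support /outer_idx /hat; lia.
Qed.
End OuterBlock.

Hypothesis i_le_n : (i <= n)%N.

Lemma in_zn_Xplus j k : (1 <= j <= i)%N -> (1 <= k <= i)%N -> in_zn (Xplus j k).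
Proof.
move=> Hj Hk; split; first by apply: in_sp_Xplus; lia.
rewrite /Xplus -[E j _]scale1r; have [_ suppC] := supported_on_subspace R n zn_support.
by apply: suppC; apply: supported_on_E; rewrite /zn_support /hat; lia.
Qed.

Lemma lgamma_comb_entry a (r s : 'I_N) : (r.+1 <= i)%N -> (s.+1 <= i)%N ->
  lgamma_comb a r s = a r.+1 s.+1.
Proof.
move=> Hr Hs; rewrite /lgamma_comb summxE.
rewrite (eq_big_nat _ _ (F2 := fun x => if x == r.+1 then a x s.+1 else 0)) => [|x Hx].
  by rewrite big_nat_if_eq //; lia.
rewrite summxE (eq_big_nat _ _
  (F2 := fun y => if y == s.+1 then (if x == r.+1 then a x y else 0) else 0)) => [|y Hy].
  by rewrite big_nat_if_eq //; lia.
rewrite !mxE (_ : (r.+1 == hat y) = false) ?subr0; last by rewrite /hat; lia.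
by rewrite ![_ == r.+1]eq_sym ![_ == s.+1]eq_sym;
  case: (r.+1 == x); case: (s.+1 == y); rewrite /= ?mulr1 ?mulr0.
Qed.

Lemma zl_generator_entry (r s : 'I_N) : (r.+1 <= i)%N ->
  (\sum_(1 <= j < i.+1) (E j j - E (hat j) (hat j))) r s = (r.+1 == s.+1)%:R.
Proof.
move=> Hr; rewrite summxE.
rewrite (eq_big_nat _ _ (F2 := fun j => if j == r.+1 then (s.+1 == j)%:R else 0)) => [|j Hj].
  by rewrite big_nat_if_eq 1?eq_sym //; lia.
rewrite !mxE (_ : (r.+1 == hat j) = false) ?subr0; last by rewrite /hat; lia.
by rewrite eq_sym; case: (j == r.+1).
Qed.

Hypothesis i_gt0 : (0 < i)%N.

Lemma lgamma_zl_lngamma_trivial S : in_lgamma S -> in_zl_plus_lngamma S -> S = 0.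
Proof.
move=> [a [tr_a ->]] [Y1 [Y2 [[c ->] [[_ supp2] HS]]]].
have a_diag x y : (1 <= x <= i)%N -> (1 <= y <= i)%N -> a x y = c * (x == y)%:R.
  move=> Hx Hy; have hx : (x.-1 < N)%N by lia.
  have hy : (y.-1 < N)%N by lia.
  have := congr1 (fun M : mat => M (Ordinal hx) (Ordinal hy)) HS.
  rewrite -/(lgamma_comb a) lgamma_comb_entry /= ?prednK //; try lia.
  rewrite mxE [Y2 _ _]supp2 ?addr0; last by rewrite /outer_idx prednK; lia.
  by rewrite mxE zl_generator_entry /= ?prednK //; lia.
have c0 : c = 0.
  move: tr_a; rewrite (eq_big_nat _ _ (F2 := fun _ => c)) => [|x Hx]; last first.
    by rewrite a_diag ?eqxx ?mulr1 //; lia.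
  rewrite sumr_const_nat subn1 /= -mulr_natr => /eqP; rewrite mulf_eq0 pnatr_eq0.
  by case/orP => [/eqP|] //; lia.
rewrite big_nat_cond big1 // => x /andP [Hx _]; rewrite big_nat_cond big1 // => y /andP [Hy _].
by rewrite a_diag ?c0 ?mul0r ?scale0r //; lia.
Qed.

Lemma is_pr_lgamma_zn_uniq T0 T1 T2 :
  @is_pr_lgamma_zn R n i T0 T1 -> @is_pr_lgamma_zn R n i T0 T2 -> T1 = T2.
Proof.
move=> [HT1 HD1] [HT2 HD2]; apply/eqP; rewrite -subr_eq0; apply/eqP.
have Hlg := tens_in_subspace in_lgamma_subspace in_zn_subspace.
have Hzl := tens_in_subspace in_zl_plus_lngamma_subspace in_zn_subspace.
have [_ slices1] := subspaceB Hlg HT1 HT2.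
have [_ slices2] : tens_in in_zl_plus_lngamma in_zn (T1 - T2).
  rewrite (_ : T1 - T2 = (T0 - T2) - (T0 - T1)); first exact: subspaceB.
  by rewrite [RHS]addrC opprB addrA subrK.
apply/ffunP => -[a b]; apply/matrixP => r s.
have := lgamma_zl_lngamma_trivial (slices1 r s) (slices2 r s).
by move/(congr1 (fun M : mat => M a b)); rewrite !mxE => ->; rewrite ffunE mxE.
Qed.
End ParabolicDecomposition.

Section Tau2.
Variable R : numClosedFieldType.
Variables n i : nat.
Hypotheses (i_ge2 : (2 <= i)%N) (i_lt_n : (i < n)%N).
Notation N := (n + n)%N.
Notation E := (@E R n).
Notation hat := (hat n).
Notation m := i.+1.
Notation Xplus := (@Xplus R n).
Notation Xminus := (@Xminus R n).
Notation Xtwo := (@Xtwo R n).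
Notation Xnegtwo := (@Xnegtwo R n).
Notation Xnegplus := (@Xnegplus R n).
Notation tpure := (@tpure R n).
Notation tens := (@tens R n).
Notation Xsum := (Xplus 1 m + Xminus 2 m).

Lemma ad_Xsum_E a b : (0 < a <= N)%N -> (0 < b <= N)%N -> ad Xsum (E a b) =
  (hat m == a)%:R *: E 1 b + (hat 1 == a)%:R *: E m b + (m == a)%:R *: E 2 b
  - (hat 2 == a)%:R *: E (hat m) b - (b == 1)%:R *: E a (hat m)
  - (b == m)%:R *: E a (hat 1) - (b == 2)%:R *: E a m + (b == hat m)%:R *: E a (hat 2).
Proof.
move=> Ha Hb; rewrite /Xplus /Xminus !(adDl, adNl) !ad_E.
by decide_nat_tests; rewrite ?andbT; entrywise.
Qed.

Ltac expand_ad_Xsum :=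
  rewrite !ad_Xsum_E; try (rewrite /hat; lia); decide_nat_tests;
  rewrite ?oppr0 ?(adr0, adDr, adNr, adZr) ?oppr0 ?addr0.

Lemma ad2_Xnegplus j k : ad Xsum (ad Xsum (Xnegplus j k)) =
  ad Xsum (ad Xsum (E (hat j) k)) + ad Xsum (ad Xsum (E (hat k) j)).
Proof. by rewrite /Xnegplus (adDr _ (E _ _)) adDr. Qed.

Lemma ad2_Xnegtwo1 : ad Xsum (ad Xsum (Xnegtwo 1)) = Xminus 2 1 - 2 *: Xtwo m.
Proof.
by rewrite /Xnegtwo; expand_ad_Xsum; expand_ad_Xsum; rewrite /Xminus /Xtwo; entrywise.
Qed.

Lemma ad2_Xnegtwo2 : ad Xsum (ad Xsum (Xnegtwo 2)) = 2 *: Xnegtwo m - Xminus 1 2.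
Proof.
by rewrite /Xnegtwo; expand_ad_Xsum; expand_ad_Xsum; rewrite /Xminus /Xnegtwo; entrywise.
Qed.

Lemma ad2_Xnegtwo_ge3 j : (3 <= j <= i)%N -> ad Xsum (ad Xsum (Xnegtwo j)) = 0.
Proof. by move=> Hj; rewrite /Xnegtwo; expand_ad_Xsum. Qed.

Lemma ad2_Xnegplus12 :
  ad Xsum (ad Xsum (Xnegplus 1 2)) = Xminus 2 2 - Xminus 1 1 - 2 *: Xminus m m.
Proof.
by rewrite ad2_Xnegplus; expand_ad_Xsum; expand_ad_Xsum; rewrite /Xminus; entrywise.
Qed.

Lemma ad2_Xnegplus1 k : (3 <= k <= i)%N -> ad Xsum (ad Xsum (Xnegplus 1 k)) = Xminus 2 k.
Proof.
by move=> Hk; rewrite ad2_Xnegplus; expand_ad_Xsum; expand_ad_Xsum; rewrite /Xminus; entrywise.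
Qed.

Lemma ad2_Xnegplus2 k : (3 <= k <= i)%N -> ad Xsum (ad Xsum (Xnegplus 2 k)) = - Xminus 1 k.
Proof.
by move=> Hk; rewrite ad2_Xnegplus; expand_ad_Xsum; expand_ad_Xsum; rewrite /Xminus; entrywise.
Qed.

Lemma ad2_Xnegplus_ge3 j k : (3 <= j)%N -> (j < k <= i)%N -> ad Xsum (ad Xsum (Xnegplus j k)) = 0.
Proof. by move=> Hj Hk; rewrite ad2_Xnegplus; expand_ad_Xsum. Qed.

Variable c0 : R.
Hypothesis c0_neq0 : c0 != 0.

Definition tau2_pr : tens := (4 * c0)^-1 *: \sum_(1 <= k < i.+1)
  (tpure (Xminus 2 k) (Xplus 1 k) - tpure (Xminus 1 k) (Xplus 2 k)).

Definition tau2_rest : tens := (2 * c0)^-1 *: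
  (tpure (Xnegtwo m) (Xplus 2 2) - tpure (Xminus m m) (Xplus 1 2) - tpure (Xtwo m) (Xplus 1 1)).

Lemma tau2_split : @tau2 R n i c0 Xsum = tau2_pr + tau2_rest.
Proof.
pose f Y := ad Xsum (ad Xsum Y).
have pure A B : tmapl f (tpure A B) = tpure (f A) B := tmapl_pure (ad Xsum \o ad Xsum) A B.
have long_roots : tmapl f (\sum_(1 <= j < m) tpure (Xnegtwo j) (Xtwo j)) =
    tpure (f (Xnegtwo 1)) (Xtwo 1) + tpure (f (Xnegtwo 2)) (Xtwo 2).
  rewrite tmapl_sum 2?big_ltn ?addrA; try lia.
  rewrite !pure big_nat_cond big1 ?addr0 // => j /andP [Hj _].
  by rewrite pure /f ad2_Xnegtwo_ge3 ?tpure0l //; lia.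
have short_roots : tmapl f (\sum_(1 <= j < m) \sum_(j.+1 <= k < m)
      tpure (Xnegplus j k) (Xplus j k)) =
    tpure (f (Xnegplus 1 2)) (Xplus 1 2)
    + \sum_(3 <= k < m) tpure (Xminus 2 k) (Xplus 1 k)
    - \sum_(3 <= k < m) tpure (Xminus 1 k) (Xplus 2 k).
  rewrite tmapl_sum 2?big_ltn; try lia.
  rewrite !tmapl_sum [in X in X + _]big_ltn; try lia.
  rewrite pure [X in _ + (_ + X)]big_nat_cond [X in _ + (_ + X)]big1 => [|j /andP [Hj _]].
    rewrite addr0 -sumrN; congr (_ + _ + _); apply: eq_big_nat => k Hk;
      rewrite pure /f ?ad2_Xnegplus1 ?ad2_Xnegplus2 ?tpureNl //; lia.
  rewrite tmapl_sum big_nat_cond big1 // => k /andP [Hk _].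
  by rewrite pure /f ad2_Xnegplus_ge3 ?tpure0l //; lia.
rewrite /tau2 /omega raddfD /= !tmaplZ long_roots short_roots /f.
rewrite ad2_Xnegtwo1 ad2_Xnegtwo2 ad2_Xnegplus12 /tau2_pr /tau2_rest.
rewrite (@big_ltn _ _ _ 1 m) ?(@big_ltn _ _ _ 2 m); try lia.
rewrite sumrB [Xplus 2 1]Xplus_sym !Xplus_diag !(tpureDl, tpureBl, tpureNl, tpureZl, tpureZr).
apply/ffunP => p; apply/matrixP => r s.
rewrite !(ffunE, mxE, sum_ffunE, summxE).
by field.
Qed.

Lemma tau2_prE : tau2_pr = (4 * c0)^-1 *:
  (tpure (Xminus 2 1) (Xplus 1 1) - tpure (Xminus 1 2) (Xplus 2 2)
   + tpure (Xminus 2 2 - Xminus 1 1) (Xplus 1 2)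
   + \sum_(3 <= k < m) (tpure (Xminus 2 k) (Xplus 1 k) - tpure (Xminus 1 k) (Xplus 2 k))).
Proof.
rewrite /tau2_pr (@big_ltn _ _ _ 1 m) ?(@big_ltn _ _ _ 2 m); try lia.
rewrite [Xplus 2 1]Xplus_sym tpureBl; congr (_ *: _).
by apply/ffunP => p; apply/matrixP => r s; rewrite !(ffunE, mxE); ring.
Qed.

Lemma tau2_pr_in : tens_in (@in_lgamma R n i) (@in_zn R n i) tau2_pr.
Proof.
have sub := tens_in_subspace (in_lgamma_subspace R n i) (in_zn_subspace R n i).
have pure := tens_in_pure (in_lgamma_subspace R n i) (in_zn_subspace R n i).
rewrite tau2_prE; apply: subspaceZ => //; apply: subspaceD => //.
  apply: subspaceD => //; first apply: subspaceB => //.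
  - by apply: pure; [apply: in_lgamma_Xminus | apply: in_zn_Xplus]; lia.
  - by apply: pure; [apply: in_lgamma_Xminus | apply: in_zn_Xplus]; lia.
  - by apply: pure; [apply: in_lgamma_diag_diff | apply: in_zn_Xplus]; lia.
rewrite big_nat_cond; apply: subspace_sum => // k /andP [Hk _].
by apply: subspaceB => //; apply: pure; [apply: in_lgamma_Xminus | apply: in_zn_Xplus
  | apply: in_lgamma_Xminus | apply: in_zn_Xplus]; lia.
Qed.

Lemma tau2_rest_in : tens_in (@in_zl_plus_lngamma R n i) (@in_zn R n i) tau2_rest.
Proof.
have sub := tens_in_subspace (in_zl_plus_lngamma_subspace R n i) (in_zn_subspace R n i).
have pure A j k : @in_lngamma R n i A -> (1 <= j <= i)%N -> (1 <= k <= i)%N ->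
    tens_in (@in_zl_plus_lngamma R n i) (@in_zn R n i) (tpure A (Xplus j k)).
  move=> HA Hj Hk; apply: tens_in_pure.
  - exact: in_zl_plus_lngamma_subspace.
  - exact: in_zn_subspace.
  - exact: in_zl_plus_lngamma_lngamma.
  - by apply: in_zn_Xplus; lia.
apply: subspaceZ => //; apply: subspaceB => //; first apply: subspaceB => //.
- by apply: pure; try lia; apply: (in_lngamma_Xnegtwo R); lia.
- by apply: pure; try lia; apply: (in_lngamma_Xminus_diag R); lia.
- by apply: pure; try lia; apply: (in_lngamma_Xtwo R); lia.
Qed.

Lemma tau2_pr_is_pr : @is_pr_lgamma_zn R n i (@tau2 R n i c0 Xsum) tau2_pr.
Proof. by split; [exact: tau2_pr_in | rewrite tau2_split addrC addKr; exact: tau2_rest_in]. Qed.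
End Tau2.

Section HighestWeight.
Variable R : numClosedFieldType.
Variables n i : nat.
Hypotheses (i_ge2 : (2 <= i)%N) (i_lt_n : (i < n)%N).
Variable c0 : R.
Notation N := (n + n)%N.
Notation Xplus := (@Xplus R n).
Notation Xminus := (@Xminus R n).
Notation tpure := (@tpure R n).
Notation tact := (@tact R n).
Notation tens := (@tens R n).
Notation T := (@tau2_pr R n i c0).

Ltac tensorwise := apply/ffunP => ?; apply/matrixP => ? ?; rewrite !(ffunE, mxE); ring.

Lemma tact_cartan_tau2_pr h : tact (@cartan R n h) T = (h 1 + h 2) *: T.
Proof.
rewrite /tau2_pr tactZ tact_sum scalerA [(h 1 + h 2) * _]mulrC -scalerA.
congr (_ *: _); rewrite scaler_sumr; apply: eq_big_nat => k Hk.
rewrite tactB !tact_pure !ad_cartan_Xminus ?ad_cartan_Xplus; try lia.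
by rewrite !(tpureZl, tpureZr); tensorwise.
Qed.
(* For [j < i], [X_{alpha_j}] sends the summands [k = j] and [k = j + 1] of [tau2_pr]
   to opposite multiples of this tensor, so they cancel. *)
Definition Xsimple_image j : tens :=
  tpure (Xminus 1 j.+1) (Xplus 2 j) - tpure (Xminus 2 j.+1) (Xplus 1 j).

Lemma tact_Xsimple_lt_term j k : (1 <= j < i)%N -> (1 <= k <= i)%N ->
  tact (Xminus j j.+1) (tpure (Xminus 2 k) (Xplus 1 k) - tpure (Xminus 1 k) (Xplus 2 k))
  = (k == j)%:R *: Xsimple_image j - (k == j.+1)%:R *: Xsimple_image j.
Proof.
move=> Hj Hk; rewrite tactB !tact_pure !ad_Xsimple_Xminus ?ad_Xsimple_Xplus; try lia.
rewrite /Xsimple_image.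
by case: (eqVneq k j) => [?|?]; case: (eqVneq k j.+1) => [?|?]; case: (eqVneq j 1) => [?|?];
  try (exfalso; lia); subst; decide_nat_tests; tensorwise.
Qed.

Lemma tact_Xsimple_lt_tau2_pr j : (1 <= j < i)%N -> tact (Xminus j j.+1) T = 0.
Proof.
move=> Hj; rewrite /tau2_pr tactZ tact_sum.
rewrite (eq_big_nat _ _ (F2 := fun k => (k == j)%:R *: Xsimple_image j
    - (k == j.+1)%:R *: Xsimple_image j)) => [|k Hk]; last by apply: tact_Xsimple_lt_term; lia.
by rewrite sumrB (big_nat_indicator _ _ (x := j)) ?(big_nat_indicator _ _ (x := j.+1))
  ?subrr ?scaler0 //; lia.
Qed.

Lemma tact_Xsimple_gt_tau2_pr j : (i < j < n)%N -> tact (Xminus j j.+1) T = 0.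
Proof.
move=> Hj; rewrite /tau2_pr tactZ tact_sum big_nat_cond big1 ?scaler0 // => k /andP [Hk _].
rewrite tactB !tact_pure !ad_Xsimple_Xminus ?ad_Xsimple_Xplus; try lia.
by decide_nat_tests; tensorwise.
Qed.

Lemma tact_Xtwo_tau2_pr : tact (@Xtwo R n n) T = 0.
Proof.
rewrite /tau2_pr tactZ tact_sum big_nat_cond big1 ?scaler0 // => k /andP [Hk _].
rewrite tactB !tact_pure !ad_Xtwo_Xminus ?ad_Xtwo_Xplus; try lia.
by rewrite !(tpure0l, linear0) !addr0 subrr.
Qed.

Lemma tact_Xsimple_tau2_pr j : (1 <= j <= n)%N -> j != i -> tact (@Xsimple R n j) T = 0.
Proof.
move=> Hj Hji; rewrite /Xsimple; case: ltnP => Hjn; last exact: tact_Xtwo_tau2_pr.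
by case: (ltnP j i) => ?; [apply: tact_Xsimple_lt_tau2_pr | apply: tact_Xsimple_gt_tau2_pr]; lia.
Qed.

Lemma tau2_pr_neq0 : c0 != 0 -> T != 0.
Proof.
move=> c0_neq0; have o0 : (0 < N)%N by lia.
have o1 : (1 < N)%N by lia.
have on : (n < N)%N by lia.
apply/eqP => /(congr1 (fun S : tens => S (Ordinal o1, Ordinal o0) (Ordinal o0) (Ordinal on))).
rewrite /tau2_pr ffunE mxE sum_ffunE summxE ffunE mxE.
rewrite (eq_big_nat _ _ (F2 := fun k => if k == 1%N then 2 else 0)) => [|k Hk]; last first.
  by rewrite !(ffunE, mxE) /=; case: (eqVneq k 1) => [->|?]; decide_nat_tests; ring.
rewrite big_nat_if_eq; last by lia.
by move/eqP; rewrite mulf_eq0 invr_eq0 mulf_eq0 (negbTE c0_neq0) orbF !pnatr_eq0.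
Qed.
End HighestWeight.

Theorem proposition5p3 (R : numClosedFieldType) (n i : nat) (c0 : R) :
  (3 <= n)%N -> (2 <= i <= n.-1)%N -> 0 < c0 ->
  let X := @Xplus R n 1 i.+1 + @Xminus R n 2 i.+1 in       (* X_mu + X_{eps_gamma} *)
  let lam := fun h : nat -> R => h 1%N + h 2%N in    (* mu + eps_gamma = e_1 + e_2 *)
  (exists T, @is_pr_lgamma_zn R n i (@tau2 R n i c0 X) T) /\
  (forall T, @is_pr_lgamma_zn R n i (@tau2 R n i c0 X) T -> @is_hwv R n i lam T).
Proof.
move=> n_ge3 Hi c0_gt0 X lam.
have i_ge2 : (2 <= i)%N by lia.
have i_lt_n : (i < n)%N by lia.
have c0_neq0 : c0 != 0 by rewrite lt0r_neq0.
have pr_tau2 := tau2_pr_is_pr i_ge2 i_lt_n c0_neq0.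
split=> [|T HT]; first by exists (tau2_pr n i c0).
rewrite (is_pr_lgamma_zn_uniq (ltnW i_lt_n) (ltnW i_ge2) HT pr_tau2).
split; first exact: tau2_pr_neq0.
by split=> [h|j Hj Hji]; [exact: tact_cartan_tau2_pr | exact: tact_Xsimple_tau2_pr].
Qed.
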